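(* For every $n\geq 7$, in the graph $H(n)$ the set $Z$ of vertices $v$ such that a single cop starting at $v$ can guarantee capturing a single robber (who chooses his starting vertex after the cop) by round $n-4$ is exactly $\{1,2\}$.
   Context: The graph $H(7)$ has vertex set $\{1,\dots,7\}$: vertices $6,2,1,4$ form a path $6-2-1-4$; vertices $3$ and $5$ are each adjacent to all of $6,2,1,4$ and not adjacent to each other; vertex $7$ is adjacent exactly to $6$, $4$ and $3$. For $n\geq 8$, $H(n)$ is obtained from $H(n-1)$ by adding vertex $n$ adjacent exactly to $n-1$, $n-3$ and $n-4$. Graphs are reflexive (a player may stay in place). In the one-cop, one-robber game, the cop chooses a starting vertex (round 0), then the robber chooses his; in each subsequent round the cop moves to an adjacent vertex or stays, then the robber does; the robber is captured when he occupies the cop's vertex; both sides have full information. The round of capture is counted with round 0 as the initial placement. *)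

From mathcomp Require Import all_boot.
Set Implicit Arguments. Unset Strict Implicit. Unset Printing Implicit Defensive.

Definition vert (n v : nat) : bool := (1 <= v) && (v <= n).

(* Directed description of the edges of H(7). *)
Definition base_edge (u v : nat) : bool :=
  [|| (u == 6) && (v == 2), (u == 2) && (v == 1), (u == 1) && (v == 4),
      (u == 3) && (v \in [:: 6; 2; 1; 4]),
      (u == 5) && (v \in [:: 6; 2; 1; 4]) |
      (u == 7) && (v \in [:: 6; 4; 3])].

(* Edges added by the recursion: for u >= 8, u ~ u-1, u-3, u-4. *)
Definition rec_edge (u v : nat) : bool :=
  (8 <= u) && [|| v == u - 1, v == u - 3 | v == u - 4].

Definition adj (n u v : nat) : bool :=
  [&& vert n u, vert n v &
      [|| base_edge u v, base_edge v u, rec_edge u v | rec_edge v u]].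

(* Closed neighbourhood (graphs are reflexive: a player may stay). *)
Definition cnbr (n u v : nat) : bool := ((u == v) && vert n u) || adj n u v.

Definition verts (n : nat) : seq nat := iota 1 n.

(* cop_wins n k c r : the position has the cop at c and the robber at r,
   with the cop to move next (i.e. at the end of a round).  A round consists of
   a cop move then a robber move; capture happens as soon as both occupy
   the same vertex. *)
Fixpoint cop_wins (n k c r : nat) : bool :=
  match k with
  | 0 => c == r
  | k'.+1 =>
      (c == r) ||
      has (fun c' => (c' == r) ||
                     all (fun r' => cop_wins n k' c' r')
                         (filter (cnbr n r) (verts n)))
          (filter (cnbr n c) (verts n))
  end.

Definition cop_start_wins (n k v : nat) : Prop :=
  vert n v /\ forall r, vert n r -> cop_wins n k v r.

From mathcomp Require Import all_boot zify.

(* The exact capture time [capture_time n c r] of a position (cop at c, robber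
   at r, cop to move) has a closed form, checked by exhibiting from every
   position a cop move that lowers it and, against every cop move, a robber
   reply that lowers it by at most one.  Two vertices of H(n) are adjacent
   iff they differ by 1, 3 or 4, or are {1, 3}.  A robber below the cop, or
   above it at a distance 2 mod 4, forces the cop to walk down to 1 or 2 in
   steps of 4 and then to spend n - 4 more rounds; this is never more than
   n - 4 when the cop starts at 1 or 2, while from v >= 3 the robber placed
   at distance 2 survives longer. *)

Definition hadj (u v : nat) : bool :=
  [|| u + 1 == v, v + 1 == u, u + 3 == v, v + 3 == u, u + 4 == v, v + 4 == u,
      (u == 1) && (v == 3) | (u == 3) && (v == 1)].

Lemma hadjP u v : reflect
  (v = u + 1 \/ u = v + 1 \/ v = u + 3 \/ u = v + 3 \/ v = u + 4 \/ u = v + 4 \/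
   u = 1 /\ v = 3 \/ u = 3 /\ v = 1) (hadj u v).
Proof. by apply: (iffP idP); rewrite /hadj; lia. Qed.

Lemma base_edge_small u v : base_edge u v -> (u <= 7) && (v <= 7).
Proof. rewrite /base_edge !inE; lia. Qed.

Lemma edgeE u v : 1 <= u -> 1 <= v ->
  [|| base_edge u v, base_edge v u, rec_edge u v | rec_edge v u] = hadj u v.
Proof.
move=> u1 v1; have [/andP[u8 v8]|big] := boolP ((u <= 8) && (v <= 8)).
  have Iu : u \in iota 1 8 by rewrite mem_iota; lia.
  have Iv : v \in iota 1 8 by rewrite mem_iota; lia.
  have : all (fun u => all (fun v => [|| base_edge u v, base_edge v u, rec_edge u v
      | rec_edge v u] == hadj u v) (iota 1 8)) (iota 1 8) by vm_compute.
  by move=> /allP /(_ u Iu) /allP /(_ v Iv) /eqP.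
have base_big w z : ~~ ((w <= 8) && (z <= 8)) -> base_edge w z = false.
  by move=> wz; apply/negbTE/negP => /base_edge_small; lia.
rewrite !base_big //; last by rewrite andbC.
rewrite /rec_edge /hadj; lia.
Qed.

Lemma adjE n u v : adj n u v = [&& vert n u, vert n v & hadj u v].
Proof.
rewrite /adj /vert; have [/andP[u1 v1]|] := boolP ((1 <= u) && (1 <= v)).
  by rewrite edgeE.
by rewrite negb_and -!ltnNge !ltnS !leqn0 => /orP[]/eqP->; rewrite /= ?andbF.
Qed.

Lemma cnbrE n u v : cnbr n u v = [&& vert n u, vert n v & (u == v) || hadj u v].
Proof. rewrite /cnbr adjE /vert /hadj; lia. Qed.

Lemma mem_cnbr n u v : (v \in filter (cnbr n u) (verts n)) = cnbr n u v.
Proof.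
rewrite mem_filter /verts mem_iota andb_idr // cnbrE /vert; lia.
Qed.

(* Robber two below the cop (unless the cop is at 3, since 3 ~ 1), at least
   five below, or above at a distance 2 mod 4; as [c - r] is truncated, the
   first two cases force r < c. *)
Definition safe c r :=
  [|| (c - r == 2) && (c != 3), 5 <= c - r | [&& 2 <= c, c < r & (r - c) %% 4 == 2]].

Definition below_time n c := n - 4 + (c + 1) %/ 4.

Definition capture_time n c r :=
  if c == r then 0 else if hadj c r then 1 else if safe c r then below_time n c
  else if (r - c) %% 4 == 2 then n - 5
  else if (r - c) %% 4 == 1 then n - 3 - c
  else if (r - c) %% 4 == 3 then n - 5 - c else n - 6 - c.

Variant capture_time_spec n c r : nat -> Prop :=
  | CTsame : c = r -> capture_time_spec n c r 0
  | CTadj : c <> r -> hadj c r -> capture_time_spec n c r 1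
  | CTsafe : safe c r -> capture_time_spec n c r (below_time n c)
  | CTcorner m : c = 1 -> 1 <= m -> r = 4 * m + 3 -> capture_time_spec n c r (n - 5)
  | CTabove1 m : 1 <= m -> r = c + 4 * m + 1 -> capture_time_spec n c r (n - 3 - c)
  | CTabove3 m : 1 <= m -> r = c + 4 * m + 3 -> capture_time_spec n c r (n - 5 - c)
  | CTabove0 m : 1 <= m -> r = c + 4 * m + 4 -> capture_time_spec n c r (n - 6 - c).

Lemma capture_timeP n c r : 1 <= c -> capture_time_spec n c r (capture_time n c r).
Proof.
move=> c1; rewrite /capture_time.
have dr := divn_eq (r - c) 4; have drs := ltn_pmod (r - c) (isT : 0 < 4).
case: eqP => [|ne]; first exact: CTsame.
case: ifP => [a|/negbT na]; first exact: CTadj.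
case: ifP => [sf|/negbT]; first exact: CTsafe.
move: na; rewrite /safe /hadj => na ns.
case: eqP => [m2|n2]; first by apply: (@CTcorner _ _ _ ((r - c) %/ 4)); lia.
case: eqP => [m1|n1]; first by apply: (@CTabove1 _ _ _ ((r - c) %/ 4)); lia.
case: eqP => [m3|n3]; first by apply: (@CTabove3 _ _ _ ((r - c) %/ 4)); lia.
by apply: (@CTabove0 _ _ _ ((r - c) %/ 4 - 1)); lia.
Qed.

Lemma capture_time_safe n c r : safe c r -> capture_time n c r = below_time n c.
Proof.
move=> sf; have c2 : 2 <= c by move: sf; rewrite /safe; lia.
by case: capture_timeP => //; move: sf; rewrite /safe /hadj; lia.
Qed.

Lemma below_time_cnbr n c c' : cnbr n c c' -> below_time n c <= (below_time n c').+1.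
Proof. rewrite cnbrE /vert /hadj /below_time; lia. Qed.

Section Game.

Variable n : nat.
Hypothesis n_ge7 : 7 <= n.

Local Notation N := (cnbr n).
Local Notation T := (capture_time n).

Lemma capture_time_le1 c r : vert n c -> vert n r -> (T c r <= 1) = N c r.
Proof.
rewrite cnbrE /vert => vc vr; rewrite vc vr /=.
by case: (capture_timeP n c r); rewrite /safe /hadj /below_time; lia.
Qed.

Ltac cop_moves_to c' :=
  let r' := fresh "r'" in
  exists c'; split; [rewrite cnbrE /vert /hadj; lia | right => r' ];
  rewrite cnbrE /vert /hadj => /and3P[_ ? ?];
  case: (capture_timeP n c' r'); rewrite /safe /hadj /below_time; lia.

Lemma cop_move c r : vert n c -> vert n r -> c != r ->
  exists c', N c c' /\ (c' = r \/ forall r', N r r' -> T c' r' < T c r).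
Proof.
rewrite /vert => /andP[c1 cn] vr /eqP ne; case: (capture_timeP n c r c1) => //.
- by move=> _ cr; exists r; split; [rewrite cnbrE /vert cr orbT; lia | left].
- rewrite /safe /below_time => sf.
  have [c5|] := leqP 5 c; first by cop_moves_to (c - 4).
  have [c4|] := eqVneq c 4; first by cop_moves_to 1.
  have [c3|] := eqVneq c 3; first by cop_moves_to 2.
  by cop_moves_to 1.
- by move=> m *; cop_moves_to 3.
- by move=> m *; cop_moves_to (c + 1).
- by move=> m *; cop_moves_to (c + 3).
- by move=> m *; cop_moves_to (c + 4).
Qed.

Lemma cnbr_refl u : vert n u -> N u u.
Proof. by rewrite cnbrE eqxx => ->. Qed.

Ltac safe_move_to r' :=
  exists r'; [rewrite cnbrE /vert /hadj | rewrite /safe]; lia.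

Lemma safe_reply_below c r c' : vert n c -> 1 <= r ->
  (c - r = 2 /\ c <> 3) \/ 5 <= c - r -> 2 <= c' -> hadj c c' ->
  exists2 r', N r r' & safe c' r'.
Proof.
rewrite /vert => vc r1 gap c'2.
case/hadjP => [|[|[|[|[|[|[[]|[]]]]]]]] => *; subst; try lia.
- by safe_move_to (r + 1).
- case: gap => [g2|g5].
    by have [r2|r3] := leqP r 2; [safe_move_to (r + 3) | safe_move_to (r - 1)].
  have [le5|gt5] := leqP (c' + 1 - r) 5; last by safe_move_to r.
  by have [r_1|r2] := leqP r 1; [safe_move_to (r + 2) | safe_move_to (r - 1)].
- by safe_move_to r.
- case: gap => [g2|g5]; first by safe_move_to (r + 1).
  have [le5|gt5] := leqP (c' + 3 - r) 5.
    by have [r_1|r2] := leqP r 1; [safe_move_to (r + 4) | safe_move_to r].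
  have [le6|gt6] := leqP (c' + 3 - r) 6; first by safe_move_to (r + 1).
  have [le7|gt7] := leqP (c' + 3 - r) 7; last by safe_move_to r.
  by have [r_1|r2] := leqP r 1; [safe_move_to (r + 2) | safe_move_to (r - 1)].
- by safe_move_to r.
- case: gap => [g2|g5]; first by safe_move_to r.
  have [le5|gt5] := leqP (c' + 4 - r) 5; first by safe_move_to (r + 3).
  have [le6|gt6] := leqP (c' + 4 - r) 6; first by safe_move_to (r + 4).
  have [le7|gt7] := leqP (c' + 4 - r) 7; first by safe_move_to (r + 1).
  have [le8|gt8] := leqP (c' + 4 - r) 8; last by safe_move_to r.
  by have [r_1|r2] := leqP r 1; [safe_move_to (r + 2) | safe_move_to (r - 1)].
Qed.

Lemma safe_reply_above c r c' : vert n r -> 2 <= c -> c < r -> (r - c) %% 4 = 2 ->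
  2 <= c' -> hadj c c' -> exists2 r', N r r' & safe c' r'.
Proof.
rewrite /vert => vr c2 cr m2 c'2.
case/hadjP => [|[|[|[|[|[|[[]|[]]]]]]]] => *; subst; try lia.
- by have [rn|rn] := ltnP r n; [safe_move_to (r + 1) | safe_move_to (r - 3)].
- by safe_move_to (r - 1).
- by safe_move_to (r - 1).
- by safe_move_to (r - 3).
- by safe_move_to r.
- by safe_move_to r.
Qed.

Lemma safe_reply c r c' : vert n c -> vert n r -> safe c r -> 2 <= c' -> N c c' ->
  exists2 r', N r r' & safe c' r'.
Proof.
move=> vc vr sf c'2; have r_ge1 : 1 <= r by case/andP: vr.
rewrite cnbrE => /and3P[_ _ /orP[/eqP <-|cc']].
  by exists r; first exact: cnbr_refl.
move: sf; rewrite /safe => /or3P[/andP[/eqP g2 /eqP c3]|g5|/and3P[c2 cr /eqP m2]].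
- by apply: (safe_reply_below c r c') => //; left.
- by apply: (safe_reply_below c r c') => //; right.
- exact: (safe_reply_above c r c').
Qed.

Ltac robber_answers c' r' :=
  exists r'; split; [rewrite cnbrE /vert /hadj; lia
                    | case: (capture_timeP n c' r'); rewrite /safe /hadj /below_time; lia].

Lemma safe_reply_to_corner c r : vert n r -> safe c r -> hadj c 1 ->
  exists r', N r r' /\ below_time n c <= (T 1 r').+1.
Proof.
rewrite /vert /safe /below_time => vr sf adj1.
have : c = 2 \/ c = 3 \/ c = 4 \/ c = 5 by move: adj1; rewrite /hadj; lia.
case=> [|[|[|]]] c_eq; subst c.
- by have [r4|r8] := leqP r 4; [robber_answers 1 7 | robber_answers 1 (r - 1)].
- by have [rn|rn] := ltnP r n; [robber_answers 1 (r + 1) | robber_answers 1 (r - 3)].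
- by have [r2|r6] := leqP r 2; [robber_answers 1 6 | robber_answers 1 r].
- by have [r3|r7] := leqP r 3; [robber_answers 1 6 | robber_answers 1 (r - 1)].
Qed.

Lemma robber_move c r c' : vert n c -> vert n r -> 2 <= T c r -> N c c' ->
  exists r', N r r' /\ T c r <= (T c' r').+1.
Proof.
move=> vc vr + cc'; move: (vc) (vr) => /andP[c_ge1 c_le] /andP[r_ge1 r_le].
case: (capture_timeP n c r c_ge1) => // [sf _|m c_1 m1 r_eq|m m1 r_eq|m m1 r_eq|m m1 r_eq].
- have [c'1|c'2] := leqP c' 1.
    have -> : c' = 1 by move: cc'; rewrite cnbrE /vert; lia.
    apply: (safe_reply_to_corner c r) => //.
    by move: cc' sf; rewrite cnbrE /safe /vert /hadj; lia.
  have [r' rr' sf'] := safe_reply c r c' vc vr sf c'2 cc'.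
  by exists r'; split; rewrite // capture_time_safe //; apply: below_time_cnbr.
- have [->|] := eqVneq c' 3.
    by have [rn|rn] := ltnP r n; [robber_answers 3 (r + 1) | robber_answers 3 (r - 3)].
  have [->|] := eqVneq c' 4; first by robber_answers 4 (r - 1).
  by move: cc'; rewrite cnbrE /vert /hadj => cc'; robber_answers c' r.
- have [->|] := eqVneq c' (c + 1).
    by have [rn|rn] := ltnP r n;
      [robber_answers (c + 1) (r + 1) | robber_answers (c + 1) (r - 3)].
  have [->|] := eqVneq c' (c + 2); first by robber_answers (c + 2) (r - 1).
  have [->|] := eqVneq c' (c + 4); first by robber_answers (c + 4) (r - 3).
  by move: cc'; rewrite cnbrE /vert /hadj => cc'; robber_answers c' r.
- have [->|] := eqVneq c' (c + 3).
    by have [rn|rn] := ltnP r n;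
      [robber_answers (c + 3) (r + 1) | robber_answers (c + 3) (r - 3)].
  have [->|] := eqVneq c' (c + 4); first by robber_answers (c + 4) (r - 1).
  by move: cc'; rewrite cnbrE /vert /hadj => cc'; robber_answers c' r.
- have [->|] := eqVneq c' (c + 4).
    by have [rn|rn] := ltnP r n;
      [robber_answers (c + 4) (r + 1) | robber_answers (c + 4) (r - 3)].
  by move: cc'; rewrite cnbrE /vert /hadj => cc'; robber_answers c' r.
Qed.

Lemma capture_time_eq0 c r : vert n c -> vert n r -> (T c r <= 0) = (c == r).
Proof.
case/andP=> c1 _ /andP[_ rn].
by case: (capture_timeP n c r c1); rewrite /safe /below_time; lia.
Qed.

Lemma cop_winsE k c r : vert n c -> vert n r -> cop_wins n k c r = (T c r <= k).
Proof.
elim: k c r => [|k IH] c r vc vr /=; first by rewrite capture_time_eq0.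
have [<-|ne] := eqVneq c r; first by rewrite /capture_time eqxx.
rewrite /=; apply/hasP/idP => [[c' + /orP[/eqP c'r|/allP win]]|tk].
- by rewrite mem_cnbr c'r -(capture_time_le1 c r vc vr) => /leq_trans->.
- rewrite mem_cnbr => cc'; have vc' : vert n c' by move: cc'; rewrite cnbrE => /and3P[].
  have [le1|ge2] := leqP (T c r) 1; first exact: leq_trans le1 _.
  have [r' [rr' tr]] := robber_move c r c' vc vr ge2 cc'.
  have vr' : vert n r' by move: rr'; rewrite cnbrE => /and3P[].
  by rewrite (leq_trans tr) // ltnS -IH // win // mem_cnbr.
- have [c' [cc' [c'r|closer]]] := cop_move c r vc vr ne.
    by exists c'; rewrite ?mem_cnbr // c'r eqxx.
  have vc' : vert n c' by move: cc'; rewrite cnbrE => /and3P[].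
  exists c'; rewrite ?mem_cnbr //; apply/orP; right; apply/allP => r'.
  rewrite mem_cnbr => rr'; have vr' : vert n r' by move: rr'; rewrite cnbrE => /and3P[].
  by rewrite IH // -ltnS (leq_trans (closer r' rr')).
Qed.

Lemma capture_time_from_bottom c r : c <= 2 -> vert n c -> vert n r -> T c r <= n - 4.
Proof.
move=> c2 /andP[c1 _] /andP[_ rn].
by case: (capture_timeP n c r c1); rewrite /safe /below_time; lia.
Qed.

Lemma capture_time_escape c : 3 <= c -> vert n c -> exists2 r, vert n r & n - 4 < T c r.
Proof.
rewrite /vert => c3 vc; have [c2n|c2n] := leqP (c + 2) n.
  by exists (c + 2); rewrite ?capture_time_safe /safe /below_time /vert; lia.
by exists (c - 2); rewrite ?capture_time_safe /safe /below_time /vert; lia.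
Qed.

End Game.

Theorem mainTheorem4 (n : nat) : 7 <= n ->
  forall v : nat, cop_start_wins n (n - 4) v <-> (v = 1 \/ v = 2).
Proof.
move=> n7 v; split.
- case=> vv win; have [v2|v3] := leqP v 2; first by move: vv; rewrite /vert; lia.
  have [r vr far] := capture_time_escape n n7 v v3 vv.
  by move: (win r vr); rewrite cop_winsE // leqNgt far.
- move=> v12; have vv : vert n v by rewrite /vert; lia.
  split=> // r vr; rewrite cop_winsE //; apply: capture_time_from_bottom => //; lia.
Qed.
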